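(* Let $k$ be a field and let $M$ be the $\mathrm{FI}^2$-module with $M_{a,b}=0$ for $(a,b)\in\{(0,0),(1,0),(0,1)\}$ and $M_{a,b}=k$ otherwise, in which every morphism induces the identity $k\to k$ or the zero map out of $0$. Then $M$ is indecomposable, and $M$ is not isomorphic to a direct sum of external tensor products $V\boxtimes W$ of $\mathrm{FI}$-modules $V,W$.
   Context: $\mathrm{FI}^2$ has objects pairs $(a,b)\in\mathbb{N}^2$ and morphisms pairs of injections $[a]\hookrightarrow[a']$, $[b]\hookrightarrow[b']$. An $\mathrm{FI}^2$-module is a functor to $k$-vector spaces. For $\mathrm{FI}$-modules $V,W$, $(V\boxtimes W)_{a,b}=V_a\otimes W_b$. *)

From HB Require Import structures.
From mathcomp Require Import all_boot all_order all_algebra.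
Set Implicit Arguments. Unset Strict Implicit. Unset Printing Implicit Defensive.
Import GRing.Theory.
Local Open Scope ring_scope.

(* Objects: natural numbers a (standing for [a] = {0,..,a-1} = 'I_a).  We use finite functions and
   impose injectivity (injF) wherever a morphism is required. *)
Definition FImor (a a' : nat) := {ffun 'I_a -> 'I_a'}.
Definition injF (a a' : nat) (f : FImor a a') : bool := injectiveb f.
Definition idF (a : nat) : FImor a a := [ffun i => i].
Definition compF (a a' a'' : nat) (f' : FImor a' a'') (f : FImor a a') : FImor a a'' :=
  [ffun i => f' (f i)].

Record FImod (k : fieldType) := FIMod {
  FIobj : nat -> lmodType k;
  FImap : forall a a', FImor a a' -> FIobj a -> FIobj a' }.
Arguments FImap {k} _ {a a'} _ _.

Definition isFImod (k : fieldType) (V : FImod k) : Prop :=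
  [/\ (forall a a' (f : FImor a a'), injF f -> linear (FImap V f)),
      (forall a (x : FIobj V a), FImap V (idF a) x = x) &
      (forall a a' a'' (f : FImor a a') (f' : FImor a' a''),
         injF f -> injF f' -> forall x : FIobj V a,
         FImap V (compF f' f) x = FImap V f' (FImap V f x))].

Record FI2mod (k : fieldType) := FI2Mod {
  F2obj : nat -> nat -> lmodType k;
  F2map : forall a b a' b', FImor a a' -> FImor b b' -> F2obj a b -> F2obj a' b' }.
Arguments F2map {k} _ {a b a' b'} _ _ _.

Definition isFI2mod (k : fieldType) (X : FI2mod k) : Prop :=
  [/\ (forall a b a' b' (f : FImor a a') (g : FImor b b'),
         injF f -> injF g -> linear (F2map X f g)),
      (forall a b (x : F2obj X a b), F2map X (idF a) (idF b) x = x) &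
      (forall a b a' b' a'' b'' (f : FImor a a') (g : FImor b b')
              (f' : FImor a' a'') (g' : FImor b' b''),
         injF f -> injF g -> injF f' -> injF g' -> forall x : F2obj X a b,
         F2map X (compF f' f) (compF g' g) x = F2map X f' g' (F2map X f g x))].

Definition isFI2hom (k : fieldType) (A B : FI2mod k)
    (phi : forall a b, F2obj A a b -> F2obj B a b) : Prop :=
  (forall a b, linear (phi a b)) /\
  (forall a b a' b' (f : FImor a a') (g : FImor b b'), injF f -> injF g ->
     forall x : F2obj A a b, phi a' b' (F2map A f g x) = F2map B f g (phi a b x)).

Definition isZeroFI2 (k : fieldType) (X : FI2mod k) : Prop :=
  forall a b (x : F2obj X a b), x = 0.

(* [is_dsum N X iota]: the natural maps iota i : N i -> X induce an
   isomorphism  (direct sum over i of N i) ~= X, i.e. pointwise the induced map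
   from the (finitely supported) direct sum is surjective and injective. *)
Definition is_dsum (k : fieldType) (I : eqType) (N : I -> FI2mod k) (X : FI2mod k)
    (iota : forall i a b, F2obj (N i) a b -> F2obj X a b) : Prop :=
  (forall i, isFI2hom (iota i)) /\
  (forall a b,
    (forall x : F2obj X a b, exists (s : seq I) (y : forall i, F2obj (N i) a b),
        x = \sum_(i <- s) iota i a b (y i)) /\
    (forall (s : seq I) (y : forall i, F2obj (N i) a b), uniq s ->
        \sum_(i <- s) iota i a b (y i) = 0 -> forall i, i \in s -> y i = 0)).
Arguments is_dsum {k I} N X iota.

Definition indecomposableFI2 (k : fieldType) (X : FI2mod k) : Prop :=
  ~ isZeroFI2 X /\
  forall (N : bool -> FI2mod k) (iota : forall i a b, F2obj (N i) a b -> F2obj X a b),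
    (forall i, isFI2mod (N i)) -> is_dsum N X iota -> exists i, isZeroFI2 (N i).

Definition bilinear_map (k : fieldType) (U V Z : lmodType k) (phi : U -> V -> Z) : Prop :=
  (forall v, linear (fun u => phi u v)) /\ (forall u, linear (phi u)).

Definition is_tensor (k : fieldType) (U V T : lmodType k) (beta : U -> V -> T) : Prop :=
  bilinear_map beta /\
  forall (Z : lmodType k) (phi : U -> V -> Z), bilinear_map phi ->
    exists psi : T -> Z,
      [/\ linear psi, (forall u v, psi (beta u v) = phi u v) &
          (forall psi' : T -> Z, linear psi' -> (forall u v, psi' (beta u v) = phi u v) ->
             forall t, psi' t = psi t)].
Arguments is_tensor {k U V T} beta.

(* [is_ext_tensor V W X]: X ~= V ⊠ W, i.e. X_{a,b} = V_a ⊗ W_b (via beta) and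
   the structure maps of X are V(f) ⊗ W(g). *)
Definition is_ext_tensor (k : fieldType) (V W : FImod k) (X : FI2mod k) : Prop :=
  exists beta : forall a b, FIobj V a -> FIobj W b -> F2obj X a b,
    (forall a b, is_tensor (beta a b)) /\
    (forall a b a' b' (f : FImor a a') (g : FImor b b'), injF f -> injF g ->
       forall v w, F2map X f g (beta a b v w) = beta a' b' (FImap V f v) (FImap W g w)).

(* dim M_{a,b} = 0 for (a,b) in {(0,0),(1,0),(0,1)} (i.e. a+b<2), else 1.
   M_{a,b} = k^{dim}, as row vectors; every structure map is the identity
   k -> k (the 1x1 all-ones matrix) or a map out of / into 0. *)
Definition dM (a b : nat) : nat := if (a + b < 2)%N then 0%N else 1%N.

Definition Mobj (k : fieldType) (a b : nat) : lmodType k := 'rV[k]_(dM a b).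

Definition Mmap (k : fieldType) (a b a' b' : nat) (f : FImor a a') (g : FImor b b')
   (v : Mobj k a b) : Mobj k a' b' :=
  (v : 'rV[k]_(dM a b)) *m (const_mx 1 : 'M[k]_(dM a b, dM a' b')).

Definition Mmod (k : fieldType) : FI2mod k := @FI2Mod k (Mobj k) (@Mmap k).

From HB Require Import structures.
From mathcomp Require Import all_boot all_order all_algebra.
From mathcomp Require Import zify.
From Stdlib Require Import Classical.
Set Implicit Arguments. Unset Strict Implicit. Unset Printing Implicit Defensive.
Import GRing.Theory.
Local Open Scope ring_scope.

(* Every structure map of M is an identity k -> k or a map out of 0, so in any
   decomposition M = (+)_i N_i two nonzero elements, pushed forward to a common
   object (a,b) where M_{a,b} = k, become proportional; by directness they lie
   in the same summand.  Hence M is indecomposable, and a decomposition into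
   external tensor products V_i ⊠ W_i has a single nonzero summand V ⊠ W.
   Since V_2 ⊗ W_0 = M_{2,0} and V_0 ⊗ W_2 = M_{0,2} are nonzero, the
   embeddings into M give nonzero functionals on V_0 and W_0 whose product
   factors through V_0 ⊗ W_0 = M_{0,0} = 0, a contradiction. *)

Section LinearFun.
Variables (k : fieldType) (U V : lmodType k) (f : U -> V).
Hypothesis f_lin : linear f.

Lemma linear_fun0 : f 0 = 0.
Proof. by rewrite -(subrr 0) (zmod_morphism_linear f_lin) subrr. Qed.

Lemma linear_funN u : f (- u) = - f u.
Proof. by rewrite -sub0r (zmod_morphism_linear f_lin) linear_fun0 sub0r. Qed.

Lemma linear_funZ a u : f (a *: u) = a *: f u.
Proof. by have := f_lin a u 0; rewrite !addr0 linear_fun0 addr0. Qed.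

End LinearFun.

Lemma injF_leq a a' (f : FImor a a') : injF f -> (a <= a')%N.
Proof. by move/injectiveP/leq_card; rewrite !card_ord. Qed.

Definition widenF a c (le_ac : (a <= c)%N) : FImor a c :=
  [ffun x => widen_ord le_ac x].

Lemma injF_widenF a c (le_ac : (a <= c)%N) : injF (widenF le_ac).
Proof. by apply/injectiveP => x y; rewrite !ffunE => /(congr1 val) /= /val_inj. Qed.

Lemma dM_le1 a b : (dM a b <= 1)%N.
Proof. by rewrite /dM; case: ifP. Qed.

Lemma dM_leq a b a' b' : (a <= a')%N -> (b <= b')%N -> (dM a b <= dM a' b')%N.
Proof. by rewrite /dM; case: ifP; case: ifP => //; lia. Qed.

Section RowVectorsOfLengthAtMostOne.
Variable k : fieldType.

Lemma rV1_neq0 (x : 'rV[k]_1) : x != 0 -> x 0 0 != 0.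
Proof. by apply: contra => /eqP x0; apply/eqP/rowP => j; rewrite ord1 x0 mxE. Qed.

Lemma rV_le1_proportional n (x y : 'rV[k]_n) :
  (n <= 1)%N -> x != 0 -> exists c, y = c *: x.
Proof.
case: n x y => [|[|//]] x y _ x_neq0; first by rewrite thinmx0 eqxx in x_neq0.
exists (y 0 0 / x 0 0); apply/rowP => j.
by rewrite ord1 mxE divfK // rV1_neq0.
Qed.

Lemma mul_rV_const1_id n (v : 'rV[k]_n) :
  (n <= 1)%N -> v *m (const_mx 1 : 'M_n) = v.
Proof.
case: n v => [|[|//]] v _; first by rewrite !thinmx0.
by apply/rowP => j; rewrite !mxE big_ord1 !mxE mulr1 !ord1.
Qed.

Lemma mul_rV_const1A m n p (v : 'rV[k]_m) :
  (m <= n)%N -> (n <= p)%N -> (p <= 1)%N ->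
  v *m (const_mx 1 : 'M_(m, p)) =
    v *m (const_mx 1 : 'M_(m, n)) *m (const_mx 1 : 'M_(n, p)).
Proof.
case: m v => [|[|m]] v le_mn le_np le_p1; [by rewrite !thinmx0 !mul0mx | | lia].
have [-> ->] : n = 1%N /\ p = 1%N by lia.
by apply/rowP => j; rewrite !mxE !big_ord1 !mxE !big_ord1 !mxE !mulr1.
Qed.

Lemma mul_rV_const1_eq0 m n (v : 'rV[k]_m) : (m <= n)%N -> (m <= 1)%N ->
  v *m (const_mx 1 : 'M_(m, n)) = 0 -> v = 0.
Proof.
case: m v => [|[|//]] v le_mn _; first by rewrite !thinmx0.
case: n le_mn => // n _ /rowP /(_ ord0); rewrite !mxE big_ord1 !mxE mulr1 => v0.
by apply/rowP => j; rewrite ord1 v0 mxE.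
Qed.

Lemma const1_rV1_neq0 : (const_mx 1 : 'rV[k]_1) != 0.
Proof. by apply/eqP => /rowP /(_ ord0); rewrite !mxE => /eqP; rewrite oner_eq0. Qed.

End RowVectorsOfLengthAtMostOne.

Lemma Mmod_isFI2mod (k : fieldType) : isFI2mod (Mmod k).
Proof.
split=> [a b a' b' f g _ _ c u v | a b x
        | a b a' b' a'' b'' f g f' g' f_inj g_inj f'_inj g'_inj x].
- by rewrite /= /Mmap mulmxDl scalemxAl.
- exact: mul_rV_const1_id (dM_le1 a b).
- apply: mul_rV_const1A; last exact: dM_le1.
  + by apply: dM_leq; apply: injF_leq; [exact: f_inj | exact: g_inj].
  + by apply: dM_leq; apply: injF_leq; [exact: f'_inj | exact: g'_inj].
Qed.

Section TensorProduct.
Variables (k : fieldType) (U V T : lmodType k) (beta : U -> V -> T).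
Hypothesis beta_tensor : is_tensor beta.

Lemma is_tensor_pure_neq0 (t : T) : t != 0 -> exists u v, beta u v != 0.
Proof.
move=> t_neq0; apply: NNPP => no_pure.
have beta0 u v : beta u v = 0.
  by apply: NNPP => /eqP beta_neq0; apply: no_pure; exists u, v.
have [psi [_ _ psi_unique]] := beta_tensor.2 _ beta beta_tensor.1.
have zero_lin : linear (fun _ : T => (0 : T)) by move=> c x y; rewrite scaler0 addr0.
have id_eq := psi_unique id (fun c x y => erefl) (fun u v => erefl).
have zero_eq := psi_unique _ zero_lin (fun u v => esym (beta0 u v)).
by move: t_neq0; rewrite (id_eq t) -zero_eq eqxx.
Qed.

(* Pure tensors are detected by products of linear forms, which are bilinear
   and hence factor through [beta]. *)
Lemma is_tensor_neq0 (lam : U -> k^o) (mu : V -> k^o) u v :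
  linear lam -> linear mu -> lam u != 0 -> mu v != 0 -> beta u v != 0.
Proof.
move=> lam_lin mu_lin lam_neq0 mu_neq0.
pose phi u v : k^o := lam u * mu v.
have phi_bilin : bilinear_map phi.
  split=> [v' | u'] c x y; rewrite /phi ?lam_lin ?mu_lin.
    by rewrite mulrDl -scalerAl.
  by rewrite mulrDr -scalerAr.
have [psi [psi_lin psi_beta _]] := beta_tensor.2 _ phi phi_bilin.
apply: contra (mulf_neq0 lam_neq0 mu_neq0) => /eqP beta0.
by rewrite -[_ * _]/(phi u v) -psi_beta beta0 (linear_fun0 psi_lin).
Qed.

End TensorProduct.

Section DirectSum.
Variables (k : fieldType) (I : eqType) (N : I -> FI2mod k) (X : FI2mod k).
Variable iota : forall i a b, F2obj (N i) a b -> F2obj X a b.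
Arguments iota : clear implicits.
Hypothesis X_dsum : is_dsum N X iota.

Definition single i a b (z : F2obj (N i) a b) : forall j, F2obj (N j) a b :=
  fun j => match i =P j with
           | ReflectT e => eq_rect i (fun j => F2obj (N j) a b) z j e
           | ReflectF _ => 0
           end.

Lemma single_id i a b (z : F2obj (N i) a b) : single z i = z.
Proof. by rewrite /single; case: eqP => // e; rewrite (eq_axiomK e). Qed.

Lemma single_neq i j a b (z : F2obj (N i) a b) : i != j -> single z j = 0.
Proof. by rewrite /single; case: eqP. Qed.

Lemma iota_linear i a b : linear (iota i a b).
Proof. exact: (X_dsum.1 i).1. Qed.

Lemma iota0 i a b : iota i a b 0 = 0.
Proof. exact: linear_fun0 (@iota_linear i a b). Qed.

Lemma iotaN i a b (z : F2obj (N i) a b) : iota i a b (- z) = - iota i a b z.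
Proof. exact: linear_funN (@iota_linear i a b) z. Qed.

Lemma iotaZ i a b c (z : F2obj (N i) a b) : iota i a b (c *: z) = c *: iota i a b z.
Proof. exact: linear_funZ (@iota_linear i a b) c z. Qed.

Lemma iota_eq0 i a b (z : F2obj (N i) a b) : iota i a b z = 0 -> z = 0.
Proof.
move=> iz0; have := (X_dsum.2 a b).2 [:: i] (single z) isT.
rewrite big_seq1 single_id => /(_ iz0 i).
by rewrite single_id mem_seq1 eqxx => ->.
Qed.

Lemma iota_neq0 i a b (z : F2obj (N i) a b) : z != 0 -> iota i a b z != 0.
Proof. by apply: contra => /eqP /iota_eq0 ->. Qed.

Lemma iota_add_eq0 i j a b (z : F2obj (N i) a b) (z' : F2obj (N j) a b) :
  i != j -> iota i a b z + iota j a b z' = 0 -> z' = 0.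
Proof.
move=> neq_ij sum0; pose y m := single z m + single z' m.
have neq_ji : j != i by rewrite eq_sym.
have := (X_dsum.2 a b).2 [:: i; j] y; rewrite /= inE neq_ij => /(_ isT).
rewrite big_cons big_seq1 /y !single_id (single_neq z neq_ij) (single_neq z' neq_ji).
rewrite addr0 add0r => /(_ sum0 j); rewrite !inE eqxx orbT => /(_ isT).
by rewrite (single_neq z neq_ij) add0r single_id.
Qed.

Lemma dsum_cover a b (x : F2obj X a b) :
  x != 0 -> exists i (z : F2obj (N i) a b), z != 0.
Proof.
have [s [y ->]] := (X_dsum.2 a b).1 x.
case: (boolP (has (fun i => y i != 0) s)) => [/hasP [i _ yi] _ | /hasPn y0].
  by exists i, (y i).
by rewrite big1_seq ?eqxx // => i /andP [_ /y0 /negPn /eqP ->]; rewrite iota0.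
Qed.

End DirectSum.

Section DirectSumOfMmod.
Variables (k : fieldType) (I : eqType) (N : I -> FI2mod k).
Variable iota : forall i a b, F2obj (N i) a b -> F2obj (Mmod k) a b.
Arguments iota : clear implicits.
Hypothesis M_dsum : is_dsum N (Mmod k) iota.

Lemma iota_widen_neq0 i a b c d (y : F2obj (N i) a b) :
  (a <= c)%N -> (b <= d)%N -> y != 0 -> exists z : F2obj (N i) c d, iota i c d z != 0.
Proof.
move=> le_ac le_bd y_neq0.
exists (F2map (N i) (widenF le_ac) (widenF le_bd) y).
rewrite ((M_dsum.1 i).2 _ _ _ _ _ _ (injF_widenF _) (injF_widenF _)) /= /Mmap.
apply: contra (iota_neq0 M_dsum y_neq0) => /eqP /mul_rV_const1_eq0 -> //.
  exact: dM_leq.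
exact: dM_le1.
Qed.

Lemma dsum_Mmod_summand_eq i j a b a' b'
    (y : F2obj (N i) a b) (y' : F2obj (N j) a' b') :
  y != 0 -> y' != 0 -> i = j.
Proof.
move=> y_neq0 y'_neq0.
have [z iz_neq0] := iota_widen_neq0 (leq_maxl a a') (leq_maxl b b') y_neq0.
have [z' iz'_neq0] := iota_widen_neq0 (leq_maxr a a') (leq_maxr b b') y'_neq0.
have [c iz'E] := rV_le1_proportional (iota j _ _ z') (dM_le1 _ _) iz_neq0.
apply/eqP/negPn/negP => neq_ij.
have /eqP : - z' = 0.
  apply: (iota_add_eq0 M_dsum neq_ij (z := c *: z)).
  by rewrite (iotaZ M_dsum) (iotaN M_dsum) -iz'E subrr.
rewrite oppr_eq0 => /eqP z'0.
by move: iz'_neq0; rewrite z'0 (iota0 M_dsum) eqxx.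
Qed.

Lemma dsum_Mmod_not_ext_tensor i (V W : FImod k)
    (z20 : F2obj (N i) 2%N 0%N) (z02 : F2obj (N i) 0%N 2%N) :
  z20 != 0 -> z02 != 0 -> ~ is_ext_tensor V W (N i).
Proof.
move=> z20_neq0 z02_neq0 [beta [beta_tensor _]].
have [v2 [w0 vw_neq0]] := is_tensor_pure_neq0 (beta_tensor 2%N 0%N) z20_neq0.
have [u0 [w2 uw_neq0]] := is_tensor_pure_neq0 (beta_tensor 0%N 2%N) z02_neq0.
pose lam u : k^o := iota i 0%N 2%N (beta 0%N 2%N u w2) 0 0.
pose mu w : k^o := iota i 2%N 0%N (beta 2%N 0%N v2 w) 0 0.
have lam_lin : linear lam.
  move=> c u u'; rewrite /lam.
  have /= -> := (beta_tensor 0%N 2%N).1.1 w2 c u u'.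
  by rewrite (iota_linear M_dsum) !mxE.
have mu_lin : linear mu.
  move=> c w w'; rewrite /mu (beta_tensor 2%N 0%N).1.2.
  by rewrite (iota_linear M_dsum) !mxE.
have : beta 0%N 0%N u0 w0 != 0.
  by apply: (is_tensor_neq0 (beta_tensor 0%N 0%N) lam_lin mu_lin);
    apply: rV1_neq0;
    [exact: (iota_neq0 M_dsum uw_neq0 : _ != _ :> 'rV_1)
    |exact: (iota_neq0 M_dsum vw_neq0 : _ != _ :> 'rV_1)].
suff -> : beta 0%N 0%N u0 w0 = 0 by rewrite eqxx.
by apply: (iota_eq0 M_dsum); exact: thinmx0.
Qed.

End DirectSumOfMmod.

Lemma not_isZeroFI2P (k : fieldType) (X : FI2mod k) :
  ~ isZeroFI2 X -> exists a b (x : F2obj X a b), x != 0.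
Proof.
move=> X_neq0; apply: NNPP => X0; apply: X_neq0 => a b x.
by apply: NNPP => /eqP x_neq0; apply: X0; exists a, b, x.
Qed.

Lemma Mmod_indecomposable (k : fieldType) : indecomposableFI2 (Mmod k).
Proof.
split=> [M0 | N iota _ M_dsum].
  exact: (negP (const1_rV1_neq0 k)) (introT eqP (M0 2%N 0%N _)).
apply: NNPP => no_zero.
have [a [b [x x_neq0]]] := not_isZeroFI2P (fun N0 => no_zero (ex_intro _ true N0)).
have [a' [b' [x' x'_neq0]]] := not_isZeroFI2P (fun N0 => no_zero (ex_intro _ false N0)).
by have := dsum_Mmod_summand_eq M_dsum x_neq0 x'_neq0.
Qed.

Theorem mainTheorem7 (k : fieldType) :
  isFI2mod (Mmod k) /\
  indecomposableFI2 (Mmod k) /\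
  ~ (exists (I : eqType) (V W : I -> FImod k) (N : I -> FI2mod k)
            (iota : forall i a b, F2obj (N i) a b -> F2obj (Mmod k) a b),
       (forall i, [/\ isFImod (V i), isFImod (W i), isFI2mod (N i)
                    & is_ext_tensor (V i) (W i) (N i)]) /\
       is_dsum N (Mmod k) iota).
Proof.
split; first exact: Mmod_isFI2mod.
split; first exact: Mmod_indecomposable.
move=> [I [V [W [N [iota [summands M_dsum]]]]]].
have [i [z20 z20_neq0]] :=
  dsum_cover M_dsum (const1_rV1_neq0 k : (_ : F2obj (Mmod k) 2%N 0%N) != 0).
have [j [z02 z02_neq0]] :=
  dsum_cover M_dsum (const1_rV1_neq0 k : (_ : F2obj (Mmod k) 0%N 2%N) != 0).
have eq_ij := dsum_Mmod_summand_eq M_dsum z20_neq0 z02_neq0; subst j.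
have [_ _ _ ext_tensor] := summands i.
exact: (dsum_Mmod_not_ext_tensor M_dsum z20_neq0 z02_neq0 ext_tensor).
Qed.
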